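(* Let $W\in\mathrm{Mat}(n,\mathbb{Z})$ be a P-admissible matrix and let $Q=(q_0,\ldots,q_n)$ be a reduced weights vector associated with $W$. Then: (a) $(\widehat W^T)^*_Q=W$; (b) if $s$ is the gcd of all entries of $\mathrm{Adj}(W)$ and $s_i$ is the gcd of the entries of the $i$-th row of $\mathrm{Adj}(W)$, then $q_0=|\det\widehat W|$, $q_i=s_i/s$ for $1\le i\le n$, and $\mathrm{lcm}(Q)=|\det W|/s$; (c) if $Q_1$ and $Q_2$ are reduced weights vectors associated with the same P-admissible matrix $W$, then $Q_1=Q_2$; (d) there exists a unique F-admissible matrix $V$ with $W=(V^0)^*_Q$ and $Q=(|V_0|,\ldots,|V_n|)$.
   Context: A weights vector is an $(n+1)$-tuple of positive integers with gcd $1$; it is reduced if $\gcd(q_i:i\neq j)=1$ for every $j$. For $V=(\mathbf{v}_0,\ldots,\mathbf{v}_n)\in\mathrm{Mat}(n,n+1;\mathbb{Z})$, $V_j$ is the determinant of $V$ with column $\mathbf{v}_j$ deleted and $V^0=(\mathbf{v}_1,\ldots,\mathbf{v}_n)$. $V$ is F-admissible if all $V_j\neq0$, $\gcd(V_0,\ldots,V_n)=1$ and $\sum_j|V_j|\mathbf{v}_j=0$. For $A\in\mathrm{GL}(n,\mathbb{Q})$, $A^*=(A^{-1})^T$. The weighted transverse of $V$ (all $V_j\ne0$) is $(V^0)^*_Q=(V^0)^*\cdot\delta\,\mathrm{diag}(1/|V_1|,\ldots,1/|V_n|)$, where $Q=(|V_0|,\ldots,|V_n|)$ and $\delta=\mathrm{lcm}(Q)$.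 A matrix $W\in\mathrm{Mat}(n,\mathbb{Z})$ is P-admissible if $W=(V^0)^*_Q$ for some F-admissible $V$ with $Q=(|V_0|,\ldots,|V_n|)$; then $Q,W,V$ are said to be associated. For $W\in\mathrm{GL}(n,\mathbb{Q})\cap\mathrm{Mat}(n,\mathbb{Z})$, $\mathrm{Adj}(W)=\det(W)W^{-1}$, $s_i$ is the gcd of the $i$-th row of $\mathrm{Adj}(W)$, and $\widehat W=\mathrm{diag}(|\det W|/s_1,\ldots,|\det W|/s_n)\cdot W^{-1}$. *)

From HB Require Import structures.
From mathcomp Require Import all_boot all_order all_algebra.
Set Implicit Arguments. Unset Strict Implicit. Unset Printing Implicit Defensive.
Import Order.TTheory GRing.Theory Num.Theory.
Local Open Scope ring_scope.

Definition toQ {m k : nat} (A : 'M[int]_(m, k)) : 'M[rat]_(m, k) :=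
  map_mx (fun z : int => z%:~R) A.

Definition tstar {n : nat} (A : 'M[rat]_n) : 'M[rat]_n := (invmx A)^T.

Definition weights_vector {n : nat} (Q : {ffun 'I_n.+1 -> nat}) : Prop :=
  (forall i, (0 < Q i)%N) /\ \big[gcdn/0%N]_i Q i = 1%N.

Definition reduced_weights_vector {n : nat} (Q : {ffun 'I_n.+1 -> nat}) : Prop :=
  weights_vector Q /\ forall j : 'I_n.+1, \big[gcdn/0%N]_(i | i != j) Q i = 1%N.

Definition lcmQ {n : nat} (Q : {ffun 'I_n.+1 -> nat}) : nat := \big[lcmn/1%N]_i Q i.

Definition transverseQ {n : nat} (A : 'M[rat]_n) (Q : {ffun 'I_n.+1 -> nat}) : 'M[rat]_n :=
  tstar A *m ((lcmQ Q)%:R *: diag_mx (\row_i ((Q (lift ord0 i))%:R)^-1)).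

Definition Vminor {n : nat} (V : 'M[int]_(n, n.+1)) (j : 'I_n.+1) : int :=
  \det (col' j V).

Definition V0 {n : nat} (V : 'M[int]_(n, n.+1)) : 'M[int]_n := col' ord0 V.

Definition Fadmissible {n : nat} (V : 'M[int]_(n, n.+1)) : Prop :=
  (forall j, Vminor V j != 0) /\
  \big[gcdz/0]_j Vminor V j = 1 /\
  \sum_j `|Vminor V j| *: col j V = 0.

Definition weightsOf {n : nat} (V : 'M[int]_(n, n.+1)) : {ffun 'I_n.+1 -> nat} :=
  [ffun j => `|Vminor V j|%N].

Definition wtransverse {n : nat} (V : 'M[int]_(n, n.+1)) : 'M[rat]_n :=
  transverseQ (toQ (V0 V)) (weightsOf V).

Definition associated {n : nat} (Q : {ffun 'I_n.+1 -> nat}) (W : 'M[int]_n)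
  (V : 'M[int]_(n, n.+1)) : Prop :=
  Fadmissible V /\ Q = weightsOf V /\ toQ W = wtransverse V.

Definition Padmissible {n : nat} (W : 'M[int]_n) : Prop :=
  exists V : 'M[int]_(n, n.+1), Fadmissible V /\ toQ W = wtransverse V.

Definition assoc_weights {n : nat} (Q : {ffun 'I_n.+1 -> nat}) (W : 'M[int]_n) : Prop :=
  exists V, associated Q W V.

Definition rowgcd {n : nat} (W : 'M[int]_n) (i : 'I_n) : int :=
  \big[gcdz/0]_j (\adj W) i j.

Definition adjgcd {n : nat} (W : 'M[int]_n) : int :=
  \big[gcdz/0]_(ij : 'I_n * 'I_n) (\adj W) ij.1 ij.2.

Definition hatW {n : nat} (W : 'M[int]_n) : 'M[rat]_n :=
  diag_mx (\row_i ((`|\det W|)%:~R / (rowgcd W i)%:~R)) *m invmx (toQ W).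

From HB Require Import structures.
From mathcomp Require Import all_boot all_order all_algebra ring.
Set Implicit Arguments. Unset Strict Implicit. Unset Printing Implicit Defensive.
Import Order.TTheory GRing.Theory Num.Theory.
Local Open Scope ring_scope.

(* Write W = (A^-1)^T D with A = V^0 and D = delta diag(1/q_1, ..., 1/q_n).
   Then Adj(W) = det W . D^-1 A^T, so the i-th row of Adj(W) is
   (det W q_i / delta) times the i-th column of A.  Reducedness of Q makes
   every column v_j of V primitive (its gcd divides every maximal minor V_k
   with k <> j, and these are coprime) and makes q_1, ..., q_n coprime;
   hence s_i = m q_i and s = m with m = |det W| / delta.  Consequently
   diag(|det W| / s_i) = D, so hat W = D D^-1 A^T = A^T, and everything else
   is read off from this identity; the first column of V is then forced by
   the balancing relation sum_j |V_j| v_j = 0. *)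

Lemma biggcdzE (I : finType) (P : pred I) (F : I -> int) :
  \big[gcdz/0]_(i | P i) F i = (\big[gcdn/0%N]_(i | P i) `|F i|%N)%:Z.
Proof. by elim/big_rec2: _ => // i x y _ ->. Qed.

Lemma biggcdz_Bezout (I : finType) (P : pred I) (F : I -> int) :
  {u : I -> int | \sum_(i | P i) u i * F i = \big[gcdz/0]_(i | P i) F i}.
Proof.
elim/big_ind: _.
- by exists (fun _ => 0); rewrite big1 // => i _; rewrite mul0r.
- move=> x y [u ux] [v vy]; have [a [b <-]] := Bezoutz x y.
  exists (fun i => a * u i + b * v i); rewrite -ux -vy.
  rewrite !mulr_sumr -big_split /=; apply: eq_bigr => i _.
  by rewrite mulrDl !mulrA.
- move=> i Pi; exists (fun j => (j == i)%:R).
  rewrite (bigD1 i) //= eqxx mul1r big1 ?addr0 // => j /andP[_ /negbTE ->].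
  by rewrite mul0r.
Qed.

Lemma dvdz_biggcd (I : finType) (P : pred I) (F : I -> int) i :
  P i -> (\big[gcdz/0]_(j | P j) F j %| F i)%Z.
Proof. by move=> Pi; rewrite biggcdzE dvdzE absz_nat (@biggcdn_inf _ i). Qed.

Lemma biggcdzMl (I : finType) (P : pred I) (F : I -> int) k :
  \big[gcdz/0]_(i | P i) (k * F i) = `|k|%:Z * \big[gcdz/0]_(i | P i) F i.
Proof.
rewrite !biggcdzE; congr Posz; under eq_bigr do rewrite abszM.
by rewrite -(big_morph _ (muln_gcdr `|k|%N) (muln0 _)).
Qed.

(* Bezout on v shows that c is an integer. *)
Lemma biggcdz_primitive_scale (R : numDomainType) (I : finType) (v a : I -> int)
    (c : R) :
  \big[gcdz/0]_i v i = 1 -> (forall i, (a i)%:~R = c * (v i)%:~R) ->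
  (\big[gcdz/0]_i a i)%:~R = `|c|.
Proof.
move=> v_primitive av; have [u] := @biggcdz_Bezout _ xpredT v.
rewrite v_primitive => uv.
pose k := \sum_i u i * a i.
have kc : k%:~R = c.
  rewrite -[c]mulr1 -[1 in RHS]/(1%:~R) -uv.
  rewrite !(big_morph _ (@intrD R) (mulr0z 1)) mulr_sumr.
  by apply: eq_bigr => i _; rewrite !intrM av mulrCA.
have ak i : a i = k * v i by apply: (@intr_inj R); rewrite intrM kc av.
by rewrite (eq_bigr _ (fun i _ => ak i)) biggcdzMl v_primitive mulr1 intr_norm kc.
Qed.

Lemma adjgcd_rowgcd n (W : 'M[int]_n) : adjgcd W = \big[gcdz/0]_i rowgcd W i.
Proof.
rewrite /adjgcd /rowgcd !biggcdzE -(pair_bigA _ (fun i j => `|(\adj W) i j|%N)).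
by congr Posz; apply: eq_bigr => i _; rewrite biggcdzE absz_nat.
Qed.

Lemma biggcdn_lift n (F : 'I_n.+1 -> nat) j :
  \big[gcdn/0%N]_(i | i != j) F i = \big[gcdn/0%N]_(i < n) F (lift j i).
Proof.
rewrite big_mkcond (bigD1_ord j) //= eqxx gcd0n.
by apply: eq_bigr => i _; rewrite eq_sym neq_lift.
Qed.

Lemma toQ_inj m k : injective (@toQ m k).
Proof.
move=> A B /matrixP eqAB; apply/matrixP => i j.
by have := eqAB i j; rewrite !mxE => /intr_inj.
Qed.

Lemma dvdz_col_Vminor n (V : 'M[int]_(n, n.+1)) j k :
  k != j -> (\big[gcdz/0]_r V r j %| Vminor V k)%Z.
Proof.
move=> kj; have [j' -> _] := unlift_some kj.
rewrite /Vminor (expand_det_col _ j'); apply: rpred_sum => r _.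
by apply: dvdz_mulr; rewrite mxE; apply: dvdz_biggcd.
Qed.

Lemma reduced_col_primitive n (V : 'M[int]_(n, n.+1)) j :
  reduced_weights_vector (weightsOf V) -> \big[gcdz/0]_r V r j = 1.
Proof.
move=> [_ reducedV]; rewrite biggcdzE; congr Posz; apply/eqP.
rewrite -dvdn1 -(reducedV j); apply/dvdn_biggcdP => k kj.
by rewrite ffunE; have := dvdz_col_Vminor V kj; rewrite dvdzE biggcdzE absz_nat.
Qed.

Lemma reduced_lift_coprime n (Q : {ffun 'I_n.+1 -> nat}) (j : 'I_n.+1) :
  reduced_weights_vector Q -> \big[gcdz/0]_(i < n) (Q (lift j i))%:Z = 1.
Proof. by move=> [_ reducedQ]; rewrite biggcdzE -biggcdn_lift reducedQ. Qed.

Lemma lcmQ_gt0 n (Q : {ffun 'I_n.+1 -> nat}) : (forall i, 0 < Q i)%N -> (0 < lcmQ Q)%N.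
Proof.
by move=> Qgt0; rewrite /lcmQ; elim/big_ind: _ => // x y; rewrite lcmn_gt0 => -> ->.
Qed.

Definition weight_diag n (Q : {ffun 'I_n.+1 -> nat}) : 'M[rat]_n :=
  (lcmQ Q)%:R *: diag_mx (\row_i ((Q (lift ord0 i))%:R)^-1).

Definition weight_diag_inv n (Q : {ffun 'I_n.+1 -> nat}) : 'M[rat]_n :=
  (lcmQ Q)%:R^-1 *: diag_mx (\row_i (Q (lift ord0 i))%:R).

Lemma transverseQE n (A : 'M[rat]_n) Q : transverseQ A Q = tstar A *m weight_diag Q.
Proof. by []. Qed.

Lemma weight_diagK n (Q : {ffun 'I_n.+1 -> nat}) :
  (forall i, 0 < Q i)%N -> weight_diag Q *m weight_diag_inv Q = 1%:M.
Proof.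
move=> Qgt0; have d_neq0 : (lcmQ Q)%:R != 0 :> rat by rewrite pnatr_eq0 -lt0n lcmQ_gt0.
rewrite /weight_diag /weight_diag_inv -scalemxAl -scalemxAr scalerA mul_diag_mx.
apply/matrixP => i j; rewrite !mxE; case: eqP => [->|_]; last by rewrite !mulr0.
by rewrite !mulr1n mulfV // mul1r mulVf // pnatr_eq0 -lt0n.
Qed.

Section WeightedTransverse.

Variables (n : nat) (V : 'M[int]_(n, n.+1)) (W : 'M[int]_n).
Hypothesis reducedV : reduced_weights_vector (weightsOf V).
Hypothesis defW : toQ W = wtransverse V.

Local Notation Q := (weightsOf V).
Local Notation q i := (Q (lift ord0 i)).
Local Notation d := (lcmQ Q).
Local Notation A := (toQ (V0 V)).

Let Q_gt0 : forall i, (0 < Q i)%N. Proof. by case: reducedV => [[]]. Qed.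

Let d_neq0 : d%:R != 0 :> rat. Proof. by rewrite pnatr_eq0 -lt0n lcmQ_gt0. Qed.

Let A_unit : A \in unitmx.
Proof.
rewrite unitmxE unitfE /toQ det_map_mx intr_eq0 -absz_eq0 -lt0n.
by have := Q_gt0 ord0; rewrite ffunE.
Qed.

Lemma mul_wtransverse_inv : toQ W *m (weight_diag_inv Q *m A^T) = 1%:M.
Proof.
rewrite defW /wtransverse transverseQE /tstar mulmxA -(mulmxA _ (weight_diag Q)).
by rewrite weight_diagK // mulmx1 -trmx_mul mulmxV // trmx1.
Qed.

Let W_unit : toQ W \in unitmx.
Proof. by case: (mulmx1_unit mul_wtransverse_inv). Qed.

Lemma invmx_wtransverse : invmx (toQ W) = weight_diag_inv Q *m A^T.
Proof.
by rewrite -[LHS]mulmx1 -mul_wtransverse_inv mulKmx.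
Qed.

Lemma det_wtransverse_neq0 : (\det W)%:~R != 0 :> rat.
Proof. by move: W_unit; rewrite unitmxE unitfE /toQ det_map_mx. Qed.

Lemma adj_wtransverse i j :
  ((\adj W) i j)%:~R = (\det W)%:~R / d%:R * (q i)%:R * (V j (lift ord0 i))%:~R :> rat.
Proof.
have adjE : toQ (\adj W) = \det (toQ W) *: invmx (toQ W).
  by rewrite /invmx W_unit scalerA mulrV ?scale1r ?unitmx_unit // /toQ map_mx_adj.
have := congr1 (fun M : 'M[rat]_n => M i j) adjE.
rewrite /toQ mxE => ->; rewrite -/(toQ W) invmx_wtransverse.
rewrite /weight_diag_inv -scalemxAl mul_diag_mx !mxE /toQ det_map_mx.
by rewrite !mulrA.
Qed.

Lemma rowgcd_wtransverse i :
  (rowgcd W i)%:~R = `|(\det W)%:~R| / d%:R * (q i)%:R :> rat.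
Proof.
rewrite (biggcdz_primitive_scale (reduced_col_primitive (lift ord0 i) reducedV)
          (adj_wtransverse i)).
by rewrite !normrM normfV !normr_nat.
Qed.

Lemma adjgcd_wtransverse : (adjgcd W)%:~R = `|(\det W)%:~R| / d%:R :> rat.
Proof.
rewrite adjgcd_rowgcd (biggcdz_primitive_scale (reduced_lift_coprime ord0 reducedV)
          (c := `|(\det W)%:~R| / d%:R)); last first.
  by move=> i; rewrite rowgcd_wtransverse.
by rewrite ger0_norm // divr_ge0.
Qed.

Lemma hatW_wtransverse : hatW W = A^T.
Proof.
rewrite /hatW.
suff -> : diag_mx (\row_i ((`|\det W|)%:~R / (rowgcd W i)%:~R)) = weight_diag Q.
  by rewrite invmx_wtransverse mulmxA weight_diagK // mul1mx.
apply/matrixP => i j; rewrite /weight_diag !mxE.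
case: eqP => [->|_]; last by rewrite !mulr0n mulr0.
rewrite !mulr1n rowgcd_wtransverse intr_norm; field.
by rewrite normr_eq0 det_wtransverse_neq0 d_neq0 pnatr_eq0 -lt0n Q_gt0.
Qed.

End WeightedTransverse.

Lemma Fadmissible_balance n (V : 'M[int]_(n, n.+1)) r : Fadmissible V ->
  `|Vminor V ord0| * V r ord0 = - \sum_i `|Vminor V (lift ord0 i)| * V r (lift ord0 i).
Proof.
move=> [_ [_ balanced]]; apply/eqP; rewrite -addr_eq0; apply/eqP.
have := congr1 (fun M : 'cV[int]_n => M r 0) balanced.
rewrite summxE big_ord_recl !mxE => sum0; rewrite -[RHS]sum0.
by congr (_ + _); apply: eq_bigr => i _; rewrite !mxE.
Qed.

Lemma Fadmissible_V0_inj n (V V' : 'M[int]_(n, n.+1)) :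
  Fadmissible V -> Fadmissible V' -> weightsOf V = weightsOf V' -> V0 V = V0 V' ->
  V = V'.
Proof.
move=> FV FV' eqQ eqV0.
have minorE j : `|Vminor V j| = `|Vminor V' j|.
  by have /ffunP/(_ j) := eqQ; rewrite !ffunE -!abszE => ->.
have colE r i : V r (lift ord0 i) = V' r (lift ord0 i).
  by have /matrixP/(_ r i) := eqV0; rewrite !mxE.
have q0_neq0 : `|Vminor V ord0| != 0 by rewrite normr_eq0; case: FV.
apply/matrixP => r j; case: (unliftP ord0 j) => [i ->|->]; first exact: colE.
apply: (mulfI q0_neq0); rewrite Fadmissible_balance // [in RHS]minorE.
rewrite Fadmissible_balance //; congr -%R.
by apply: eq_bigr => i _; rewrite minorE colE.
Qed.

Lemma assoc_weights_hatW n (W : 'M[int]_n) (Q : {ffun 'I_n.+1 -> nat}) :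
  reduced_weights_vector Q -> assoc_weights Q W ->
  (Q ord0)%:R = `|\det (hatW W)| :> rat /\
  (forall i : 'I_n, (Q (lift ord0 i))%:R = (rowgcd W i)%:~R / (adjgcd W)%:~R :> rat) /\
  (lcmQ Q)%:R = (`|\det W|)%:~R / (adjgcd W)%:~R :> rat.
Proof.
move=> reducedQ [V [_ [defQ defW]]]; subst Q.
have d_neq0 : (lcmQ (weightsOf V))%:R != 0 :> rat.
  by rewrite pnatr_eq0 -lt0n lcmQ_gt0 //; case: reducedQ => [[]].
have detW_neq0 := det_wtransverse_neq0 reducedQ defW.
split.
  rewrite (hatW_wtransverse reducedQ defW) det_tr /toQ det_map_mx ffunE.
  by rewrite natr_absz intr_norm.
split=> [i|]; rewrite (adjgcd_wtransverse reducedQ defW).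
  rewrite (rowgcd_wtransverse reducedQ defW).
  by field; rewrite normr_eq0 detW_neq0 d_neq0.
by rewrite intr_norm; field; rewrite normr_eq0 detW_neq0 d_neq0.
Qed.

Theorem mainTheorem9 (n : nat) (W : 'M[int]_n) (Q : {ffun 'I_n.+1 -> nat}) :
  Padmissible W ->
  reduced_weights_vector Q ->
  assoc_weights Q W ->
  (* (a) *)
  transverseQ (hatW W)^T Q = toQ W /\
  (* (b) *)
  ((Q ord0)%:R = `|\det (hatW W)| :> rat /\
   (forall i : 'I_n, (Q (lift ord0 i))%:R = (rowgcd W i)%:~R / (adjgcd W)%:~R :> rat) /\
   (lcmQ Q)%:R = (`|\det W|)%:~R / (adjgcd W)%:~R :> rat) /\
  (* (c) *)
  (forall Q1 Q2 : {ffun 'I_n.+1 -> nat},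
     reduced_weights_vector Q1 -> assoc_weights Q1 W ->
     reduced_weights_vector Q2 -> assoc_weights Q2 W -> Q1 = Q2) /\
  (* (d) *)
  (exists! V : 'M[int]_(n, n.+1),
     Fadmissible V /\ toQ W = wtransverse V /\ Q = weightsOf V).
Proof.
move=> _ reducedQ QW; have weightsQ := assoc_weights_hatW reducedQ QW.
have [V [FV [defQ defW]]] := QW; subst Q.
split; first by rewrite (hatW_wtransverse reducedQ defW) trmxK.
split; first exact: weightsQ.
split.
  move=> Q1 Q2 reduced1 /(assoc_weights_hatW reduced1)[Q1_0 [Q1_lift _]].
  move=> reduced2 /(assoc_weights_hatW reduced2)[Q2_0 [Q2_lift _]].
  apply/ffunP => j; apply/eqP; rewrite -(eqr_nat rat).
  by case: (unliftP ord0 j) => [i ->|->]; rewrite ?Q1_lift ?Q2_lift ?Q1_0 ?Q2_0.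
exists V; split=> [//|V' [FV' [defW' eqQ]]].
apply: Fadmissible_V0_inj => //.
have := hatW_wtransverse reducedQ defW.
by rewrite (hatW_wtransverse _ defW') -?eqQ // => /trmx_inj /toQ_inj.
Qed.
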